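(* Let $B$ be any group. Suppose $w\in (B\wr C_2)'$ is given by the wreath recursion $w=(r_1,\ r_1^{-1}[f,g])$ with $r_1,f,g\in B$. Put $a_{2,1}=(f^{-1})^{r_1^{-1}}$, $a_{2,2}=r_1a_{2,1}$, $a_{1,2}=g^{a_{2,2}^{-1}}$. Then $w=[(e,a_{1,2})\sigma,\ (a_{2,1},a_{2,2})]$.
   Context: $C_2=\langle\sigma\rangle$, $\sigma=(1,2)$ acting on $\{1,2\}$. Elements of $B\wr C_2=B^2\rtimes C_2$ are written $(b_1,b_2)\tau$, with multiplication $(g_1,g_2)\tau\cdot(h_1,h_2)\rho=(g_1h_{\tau(1)},g_2h_{\tau(2)})\tau\rho$; $(b_1,b_2)$ denotes an element with trivial $C_2$-part. Conventions: $[a,b]=aba^{-1}b^{-1}$ and $a^b=bab^{-1}$. *)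

Record is_group {B : Type} (mul : B -> B -> B) (inv : B -> B) (e : B) : Prop := {
  grp_assoc : forall x y z, mul x (mul y z) = mul (mul x y) z;
  grp_mul1l : forall x, mul e x = x;
  grp_mul1r : forall x, mul x e = x;
  grp_mulVl : forall x, mul (inv x) x = e;
  grp_mulVr : forall x, mul x (inv x) = e
}.

Section Ops.
Variables (T : Type) (mul : T -> T -> T) (inv : T -> T) (e : T).

Definition comm (a b : T) : T := mul (mul (mul a b) (inv a)) (inv b).
Definition conj (a b : T) : T := mul (mul b a) (inv b).

Inductive in_derived : T -> Prop :=
| der_one : in_derived e
| der_comm : forall a b, in_derived (comm a b)
| der_mul : forall x y, in_derived x -> in_derived y -> in_derived (mul x y)
| der_inv : forall x, in_derived x -> in_derived (inv x).
End Ops.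
Arguments in_derived {T} mul inv e _.
Arguments comm {T} mul inv a b.
Arguments conj {T} mul inv a b.

Section Wreath.
Variables (B : Type) (mul : B -> B -> B) (inv : B -> B) (e : B).

(* Elements of B wr C_2 = B^2 x| C_2 : (b1, b2, t), where t = true means sigma = (1,2)
   and t = false means the identity of C_2. *)
Definition wr : Type := (B * B * bool)%type.

(* (g1,g2)tau * (h1,h2)rho = (g1 h_{tau(1)}, g2 h_{tau(2)}) tau rho *)
Definition wmul (x y : wr) : wr :=
  match x, y with
  | (g1, g2, t), (h1, h2, r) =>
      (mul g1 (if t then h2 else h1), mul g2 (if t then h1 else h2), xorb t r)
  end.

Definition winv (x : wr) : wr :=
  match x with
  | (g1, g2, false) => (inv g1, inv g2, false)
  | (g1, g2, true) => (inv g2, inv g1, true)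
  end.

Definition wone : wr := (e, e, false).
End Wreath.
Arguments wmul {B} mul x y.
Arguments winv {B} inv x.
Arguments wone {B} e.

(* Multiplying out, [[(e,c)sigma, (a,b)] = (b a^-1, a^c b^-1)].  With the given
   a21 one has a22 = r1 a21 = f^-1 r1, so the first coordinate is r1, and the
   second, after substituting a12 = g^(a22^-1), collapses to r1^-1 f g f^-1 g^-1. *)

Section Group.
Variables (B : Type) (mul : B -> B -> B) (inv : B -> B) (e : B).
Hypothesis HB : is_group mul inv e.

Lemma mulgA x y z : mul (mul x y) z = mul x (mul y z).
Proof. symmetry; apply (grp_assoc _ _ _ HB). Qed.
Lemma mul1g x : mul e x = x. Proof. apply (grp_mul1l _ _ _ HB). Qed.
Lemma mulg1 x : mul x e = x. Proof. apply (grp_mul1r _ _ _ HB). Qed.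
Lemma mulVg x : mul (inv x) x = e. Proof. apply (grp_mulVl _ _ _ HB). Qed.
Lemma mulgV x : mul x (inv x) = e. Proof. apply (grp_mulVr _ _ _ HB). Qed.

Lemma mulKg x y : mul (inv x) (mul x y) = y.
Proof. rewrite <- mulgA, mulVg, mul1g; reflexivity. Qed.
Lemma mulKVg x y : mul x (mul (inv x) y) = y.
Proof. rewrite <- mulgA, mulgV, mul1g; reflexivity. Qed.
Lemma mulgK x y : mul (mul x y) (inv y) = x.
Proof. rewrite mulgA, mulgV, mulg1; reflexivity. Qed.

Lemma invg_unique x y : mul x y = e -> inv x = y.
Proof. intro Hxy. rewrite <- (mulg1 (inv x)), <- Hxy, mulKg. reflexivity. Qed.
Lemma invMg x y : inv (mul x y) = mul (inv y) (inv x).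
Proof. apply invg_unique. rewrite mulgA, mulKVg, mulgV. reflexivity. Qed.
Lemma invgK x : inv (inv x) = x.
Proof. apply invg_unique, mulVg. Qed.
Lemma invg1 : inv e = e.
Proof. apply invg_unique, mul1g. Qed.

Lemma mul_conjVg x y : mul x (conj mul inv y (inv x)) = mul y x.
Proof. unfold conj. rewrite invgK, mulgA, mulKVg. reflexivity. Qed.

Lemma wreath_comm_sigma (a b c : B) :
  comm (wmul mul) (winv inv) (e, c, true) (a, b, false)
  = (mul b (inv a), mul (conj mul inv a c) (inv b), false).
Proof.
  unfold comm, conj; simpl.
  rewrite invg1, mul1g, !mulg1.
  reflexivity.
Qed.

Lemma conj_conjV_mulV (r f g : B) :
  let a := conj mul inv (inv f) (inv r) in
  let b := mul (inv f) r in
  mul (conj mul inv a (conj mul inv g (inv b))) (inv b)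
  = mul (inv r) (comm mul inv f g).
Proof.
  intros a b; unfold a, b, conj, comm.
  rewrite !invMg, !invgK, !mulgA, !mulKVg, mulKg, mulVg, mulg1.
  reflexivity.
Qed.

End Group.

Theorem mainTheorem4 (B : Type) (mul : B -> B -> B) (inv : B -> B) (e : B)
  (HB : is_group mul inv e) (r1 f g : B) :
  let W := wr B in
  let w : W := (r1, mul (inv r1) (comm mul inv f g), false) in
  in_derived (wmul mul) (winv inv) (wone e) w ->
  let a21 := conj mul inv (inv f) (inv r1) in
  let a22 := mul r1 a21 in
  let a12 := conj mul inv g (inv a22) in
  w = comm (wmul mul) (winv inv) ((e, a12, true) : W) ((a21, a22, false) : W).
Proof.
  intros W w _ a21 a22 a12.
  assert (Ha22 : a22 = mul (inv f) r1) by apply (mul_conjVg _ _ _ _ HB).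
  unfold w, a12.
  rewrite (wreath_comm_sigma _ _ _ _ HB).
  replace (mul a22 (inv a21)) with r1 by (symmetry; apply (mulgK _ _ _ _ HB)).
  rewrite Ha22; unfold a21.
  rewrite (conj_conjV_mulV _ _ _ _ HB).
  reflexivity.
Qed.
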